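(* Let $V$ be a reflexive Banach space, $F: V\to\mathbb{R}$ Fréchet differentiable and convex, $G\in\Gamma_0(V)$, $E=F+G$. For $1\le k\le N$ let $V_k$ be reflexive Banach spaces, $R_k^*: V_k\to V$ bounded linear with $V=\sum_k R_k^*V_k$ and surjective adjoints, and $d_k, G_k: V_k\times V\to\overline{\mathbb{R}}$ proper, convex, lower semicontinuous in the first argument. Assume: (i) (stable decomposition) there is $q>1$ such that for every bounded convex $K\subseteq V$ there is $C_{0,K}>0$ such that for all $u,v\in K\cap\operatorname{dom}G$ there exist $w_k\in V_k$ with $u-v=\sum_{k=1}^N R_k^*w_k$, $\sum_{k=1}^N d_k(w_k,v)\le \frac{C_{0,K}^q}{q}\|u-v\|^q$ and $\sum_{k=1}^N G_k(w_k,v)\le G(u)+(N-1)G(v)$; (ii) (strengthened convexity) there is $\tau_0\in(0,1]$ such that for all $v\in V$, $w_k\in V_k$, $\tau\in(0,\tau_0]$: $(1-\tau N)E(v)+\tau\sum_{k=1}^N E(v+R_k^*w_k)\ge E(v+\tau\sum_{k=1}^N R_k^*w_k)$; (iii) (local stability) there is $\omega_0>0$ such that for all $v\in\operatorname{dom}G$, $w_k\in V_k$, $1\le k\le N$: $D_F(v+R_k^*w_k,v)\le\omega_0 d_k(w_k,v)$ and $G(v+R_k^*w_k)\le G_k(w_k,v)$. Let $\tau\in(0,\tau_0]$, $\omega\ge\omega_0$. Then for every bounded convex $K\subseteq V$, $$D_F(u,v)+G(u)\le M_{\tau,\omega}(u,v)\le\frac{\omega C_{0,K'}^q}{q\tau^{q-1}}\|u-v\|^q+\tau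 G\Big(\frac1\tau u-\Big(\frac1\tau-1\Big)v\Big)+(1-\tau)G(v),\quad u,v\in K\cap\operatorname{dom}G,$$ where $K'=\{\frac1\tau u-(\frac1\tau-1)v : u,v\in K\}$ and $M_{\tau,\omega}(u,v)=\tau\inf\{\sum_{k=1}^N(\omega d_k+G_k)(w_k,v): u-v=\tau\sum_{k=1}^N R_k^*w_k,\ w_k\in V_k\}+(1-\tau N)G(v)$.
   Context: $\Gamma_0(V)$ is the set of proper, convex, lower semicontinuous functionals $V\to\mathbb{R}\cup\{+\infty\}$; $\operatorname{dom} G=\{u: G(u)<\infty\}$. Bregman distance: $D_F(u,v)=F(u)-F(v)-\langle F'(v),u-v\rangle$. *)

From HB Require Import structures.
From mathcomp Require Import all_boot all_order all_algebra.
From mathcomp Require Import all_classical all_reals all_analysis.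
Set Implicit Arguments. Unset Strict Implicit. Unset Printing Implicit Defensive.
Import Order.TTheory GRing.Theory Num.Theory.
Import numFieldNormedType.Exports.
Local Open Scope classical_set_scope.
Local Open Scope ring_scope.

Section Defs.
Variable R : realType.

Definition cvx_set (V : lmodType R) (K : set V) : Prop :=
  forall x y (t : R), K x -> K y -> 0 <= t <= 1 -> K (t *: x + (1 - t) *: y).

Definition cvx_fun (V : lmodType R) (f : V -> R) : Prop :=
  forall x y (t : R), 0 <= t <= 1 ->
    f (t *: x + (1 - t) *: y) <= t * f x + (1 - t) * f y.

Definition cvx_efun (V : lmodType R) (f : V -> \bar R) : Prop :=
  forall x y (t : R), 0 <= t <= 1 ->
    (f (t *: x + (1 - t) *: y)%R <= t%:E * f x + (1 - t)%:E * f y)%E.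

Definition proper_efun (V : Type) (f : V -> \bar R) : Prop :=
  (exists x, (f x < +oo)%E) /\ (forall x, f x != -oo%E).

Definition Gamma0 (V : normedModType R) (f : V -> \bar R) : Prop :=
  [/\ proper_efun f, cvx_efun f & lower_semicontinuous f].

Definition dom (V : Type) (G : V -> \bar R) : set V := [set u | (G u < +oo)%E].

Definition cont_lin_functional (V : normedModType R) (f : V -> R) : Prop :=
  (forall (a : R) x y, f (a *: x + y) = a * f x + f y) /\ continuous f.

(* reflexivity: every bounded linear functional on the dual V' is evaluation
   at some point of V (the canonical embedding V -> V'' is onto). *)
Definition reflexive_space (V : normedModType R) : Prop :=
  forall Phi : (V -> R) -> R,
    (forall (a : R) f g, cont_lin_functional f -> cont_lin_functional g ->
       Phi (fun x => a * f x + g x) = a * Phi f + Phi g) ->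
    (exists C : R, forall f (M : R), cont_lin_functional f -> 0 <= M ->
       (forall x, `|f x| <= M * `|x|) -> `|Phi f| <= C * M) ->
    exists x : V, forall f, cont_lin_functional f -> Phi f = f x.

(* the adjoint of a bounded linear T : W -> V is surjective onto W' *)
Definition adjoint_surjective (W V : normedModType R) (T : W -> V) : Prop :=
  forall g : W -> R, cont_lin_functional g ->
    exists f : V -> R, cont_lin_functional f /\ forall w, f (T w) = g w.

Definition bregman (V : normedModType R) (F : V -> R) (u v : V) : R :=
  F u - F v - 'd F v (u - v).

Definition Mto (V : normedModType R) (N : nat) (Vk : 'I_N -> normedModType R)
  (Rs : forall k, Vk k -> V) (d Gk : forall k, Vk k -> V -> \bar R)
  (G : V -> \bar R) (tau omega : R) (u v : V) : \bar R :=
  (tau%:E * ereal_inf [set s | exists w : forall k, Vk k,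
       (u - v = tau *: \sum_(k < N) Rs k (w k))%R /\
       s = \sum_(k < N) (omega%:E * d k (w k) v + Gk k (w k) v)]
   + (1 - tau * N%:R)%:E * G v)%E.

End Defs.

From HB Require Import structures.
From mathcomp Require Import all_boot all_order all_algebra.
From mathcomp Require Import all_classical all_reals all_analysis.
From mathcomp Require Import ring lra.
Import Order.TTheory GRing.Theory Num.Theory.
Import numFieldNormedType.Exports.
Local Open Scope classical_set_scope.
Local Open Scope ring_scope.

(* Let u - v = tau * sum_k R_k^* w_k be any admissible decomposition. Local
   stability (iii) bounds F (v + R_k^* w_k) by the linearisation
   F v + F'(v) R_k^* w_k plus omega d_k(w_k, v), and G (v + R_k^* w_k) by
   G_k(w_k, v) (as D_F >= 0 forces d_k >= 0, omega_0 may be raised to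
   omega); inserting this into the strengthened convexity (ii) the
   linear terms add up to F v + F'(v)(u - v), which leaves
   D_F(u, v) + G u <= tau sum_k (omega d_k + G_k)(w_k, v) + (1 - tau N) G v.
   Taking the infimum gives the lower bound.
   For the upper bound, u' := u / tau - (1 / tau - 1) v and v lie in K' and
   u' - v = (u - v) / tau, so the stable decomposition (i) of u' - v is an
   admissible decomposition of u - v.  The factor tau^-q coming from
   |u' - v|^q combines with the leading tau into tau^(1 - q), and the N - 1
   copies of G v combine with (1 - tau N) G v into (1 - tau) G v. *)

Lemma powRV (R : realType) (t q : R) : 0 <= t -> t^-1 `^ q = (t `^ q)^-1.
Proof. by move=> t_ge0; rewrite -powR_inv1 // -powRrM mulN1r powRN. Qed.

Lemma mulr_powR_invM (R : realType) (t x q : R) : 0 < t -> 0 <= x ->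
  t * (t^-1 * x) `^ q = x `^ q / t `^ (q - 1).
Proof.
move=> t_gt0 x_ge0; have t_ge0 := ltW t_gt0; have t_neq0 := gt_eqF t_gt0.
rewrite powRM ?invr_ge0 // powRV // powRB ?t_neq0 ?implybT // powRr1 //.
by field; rewrite t_neq0 gt_eqF ?powR_gt0.
Qed.

Lemma cvx_diff_quotient_le (R : realType) (V : lmodType R) (F : V -> R) (u v : V) (t : R) :
  cvx_fun F -> 0 < t <= 1 -> t^-1 * (F (t *: (u - v) + v) - F v) <= F u - F v.
Proof.
move=> cvxF /andP[t_gt0 t_le1]; rewrite ler_pdivrMl //.
have -> : t *: (u - v) + v = t *: u + (1 - t) *: v.
  by rewrite scalerBr scalerBl scale1r -addrA [- _ + v]addrC.
have := cvxF u v t; rewrite (ltW t_gt0) t_le1 => /(_ isT); lra.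
Qed.

Lemma bregman_ge0 (R : realType) (V : normedModType R) (F : V -> R) u v :
  cvx_fun F -> differentiable F v -> 0 <= bregman F u v.
Proof.
move=> cvxF dFv; rewrite /bregman -deriveE // subr_ge0.
have /cvg_dnbhs_at_right quot_cvg := @diff_derivable _ _ _ _ _ (u - v) dFv.
apply: (cvgr_to_le quot_cvg); near=> t; apply: cvx_diff_quotient_le => //.
by apply/andP; split; near: t; [exact: nbhs_right_gt | exact: nbhs_right_le].
Unshelve. all: by end_near.
Qed.

Lemma proper_dom_fin_num {R : realType} {V : Type} {G : V -> \bar R} {x : V} :
  proper_efun G -> dom G x -> G x \is a fin_num.
Proof. by move=> [_ G_neqNy] Gx; rewrite fin_numE G_neqNy (lt_eqF Gx). Qed.

Section LincombSet.
Context {R : realType} {V : normedModType R}.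

Definition lincomb_set (K : set V) (a b : R) : set V :=
  [set x | exists u' v', K u' /\ K v' /\ x = a *: u' - b *: v'].

Lemma lincomb_set_bounded K a b : bounded_set K -> bounded_set (lincomb_set K a b).
Proof.
case=> r [_ K_le]; have r_lt : r < `|r| + 1 by have := ler_norm r; lra.
exists ((`|a| + `|b|) * (`|r| + 1)); split; first by rewrite realE mulr_ge0 ?addr_ge0.
move=> M M_gt _ [u' [v' [Ku' [Kv' ->]]]].
apply: le_trans (ler_normB _ _) _; rewrite !normrZ.
apply: (le_trans _ (ltW M_gt)); rewrite mulrDl.
by apply: lerD; apply: ler_wpM2l => //; exact: K_le.
Qed.

Lemma lincomb_set_cvx K a b : cvx_set K -> cvx_set (lincomb_set K a b).
Proof.
move=> cK x y t [u1 [v1 [Ku1 [Kv1 ->]]]] [u2 [v2 [Ku2 [Kv2 ->]]]] t01.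
exists (t *: u1 + (1 - t) *: u2), (t *: v1 + (1 - t) *: v2).
split; [exact: cK | split; [exact: cK |]].
rewrite !scalerBr !scalerDr !scalerA ![t * _]mulrC ![(1 - t) * _]mulrC -!scalerA.
by rewrite addrACA opprD.
Qed.

Lemma lincomb_set_diag K a v : K v -> lincomb_set K a (a - 1) v.
Proof.
by move=> Kv; exists v, v; do 2!split => //; rewrite scalerBl scale1r opprB addrCA subrr addr0.
Qed.

End LincombSet.

Section Mto.
Context {R : realType} {V : normedModType R} {N : nat}.
Context {Vk : 'I_N -> normedModType R} {Rs : forall k, {linear Vk k -> V}}.
Context {d Gk : forall k, Vk k -> V -> \bar R} {G : V -> \bar R}.

Lemma Mto_le_decomposition {tau omega : R} {u v : V} {w : forall k, Vk k} {A : R} {B : \bar R} :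
  0 < tau -> 0 <= omega -> (forall k, 0 <= d k (w k) v)%E ->
  u - v = tau *: \sum_(k < N) Rs k (w k) ->
  (\sum_(k < N) d k (w k) v <= A%:E)%E -> (\sum_(k < N) Gk k (w k) v <= B)%E ->
  (Mto Rs d Gk G tau omega u v
     <= tau%:E * ((omega * A)%:E + B) + (1 - tau * N%:R)%:E * G v)%E.
Proof.
move=> tau_gt0 omega_ge0 d_ge0 uvw dA GkB.
apply: leeD2r; apply: lee_wpmul2l; first by rewrite lee_fin ltW.
apply: ge_ereal_inf; exists (\sum_(k < N) (omega%:E * d k (w k) v + Gk k (w k) v))%E.
  by exists w.
rewrite big_split /= -ge0_sume_distrr // EFinM; apply: leeD => //.
by apply: lee_wpmul2l; rewrite ?lee_fin.
Qed.

Section LocalStability.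
Context {F : V -> R} {omega0 omega : R} {v : V}.
Hypotheses (cvxF : cvx_fun F) (dFv : differentiable F v).
Hypotheses (omega0_gt0 : 0 < omega0) (omega0_le : omega0 <= omega).
Hypothesis local_stability : forall k (w : Vk k),
  ((bregman F (v + Rs k w)%R v)%:E <= omega0%:E * d k w v)%E /\
  (G (v + Rs k w)%R <= Gk k w v)%E.

Lemma local_dist_ge0 k (w : Vk k) : (0 <= d k w v)%E.
Proof.
have [bd _] := local_stability k w.
rewrite -(pmule_rge0 _ (_ : 0 < omega0%:E)%E) ?lte_fin //.
by apply: le_trans bd; rewrite lee_fin bregman_ge0.
Qed.

Lemma local_energy_le k (w : Vk k) :
  ((F (v + Rs k w)%R)%:E + G (v + Rs k w)%R <=
   (F v + 'd F v (Rs k w))%R%:E + (omega%:E * d k w v + Gk k w v))%E.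
Proof.
have [bd Gle] := local_stability k w.
have -> : F (v + Rs k w) = F v + 'd F v (Rs k w) + bregman F (v + Rs k w) v.
  by rewrite /bregman [v + _]addrC addrK; ring.
rewrite EFinD -addeA; apply: leeD => //; apply: leeD => //.
by apply: (le_trans bd); apply: lee_wpmul2r; rewrite ?local_dist_ge0 ?lee_fin.
Qed.

Lemma sum_local_energy_le (w : forall k, Vk k) :
  (\sum_(k < N) ((F (v + Rs k (w k))%R)%:E + G (v + Rs k (w k))%R) <=
   (N%:R * F v + 'd F v (\sum_(k < N) Rs k (w k)))%R%:E +
   \sum_(k < N) (omega%:E * d k (w k) v + Gk k (w k) v))%E.
Proof.
apply: le_trans; first by apply: lee_sum => k _; exact: local_energy_le.
rewrite big_split /= sumEFin big_split /= sumr_const card_ord -linear_sum.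
by rewrite mulr_natl.
Qed.

Context {tau : R}.
Hypotheses (tau_gt0 : 0 < tau) (Gv_fin : G v \is a fin_num).
Hypothesis strengthened_convexity : forall w : forall k, Vk k,
  ((F (v + tau *: \sum_(k < N) Rs k (w k))%R)%:E
     + G (v + tau *: \sum_(k < N) Rs k (w k))%R
   <= (1 - tau * N%:R)%:E * ((F v)%:E + G v)
      + tau%:E * \sum_(k < N) ((F (v + Rs k (w k))%R)%:E + G (v + Rs k (w k))%R))%E.

Lemma bregman_addG_le_decomposition (u : V) (w : forall k, Vk k) :
  u - v = tau *: \sum_(k < N) Rs k (w k) ->
  ((bregman F u v)%:E + G u <=
   tau%:E * \sum_(k < N) (omega%:E * d k (w k) v + Gk k (w k) v)
   + (1 - tau * N%:R)%:E * G v)%E.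
Proof.
move=> uvw; have vu : v + tau *: \sum_(k < N) Rs k (w k) = u by rewrite -uvw addrC subrK.
have := le_trans (strengthened_convexity w)
  (leeD2l _ (lee_wpmul2l (ltW tau_gt0 : 0 <= tau%:E)%E (sum_local_energy_le w))).
rewrite vu -(fineK Gv_fin); set S := (\sum_(k < N) (_ + _))%E; set gv := fine (G v).
rewrite -EFinD -EFinM muleDr // -EFinM addeA -EFinD addeC => convex_bound.
(* cancel the linearisation [F v + 'd F v (u - v)] of [F] at [v] on both sides *)
rewrite -EFinM -(leeD2lE (x := (F v + 'd F v (u - v))%:E)) // addeA -EFinD.
have -> : F v + 'd F v (u - v) + bregman F u v = F u by rewrite /bregman; ring.
have -> : 'd F v (u - v) = tau * 'd F v (\sum_(k < N) Rs k (w k)).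
  by rewrite uvw linearZ.
apply: (le_trans convex_bound); rewrite addeCA -EFinD; apply: leeD2l.
by rewrite lee_fin le_eqVlt; apply/orP; left; apply/eqP; ring.
Qed.

Lemma bregman_addG_le_Mto (u : V) :
  ((bregman F u v)%:E + G u <= Mto Rs d Gk G tau omega u v)%E.
Proof.
rewrite /Mto -ereal_inf_pZl // -leeBlDr ?fin_numM //.
apply: le_ereal_inf_tmp => _ [_ [w [uvw ->]] <-].
by rewrite leeBlDr ?fin_numM // bregman_addG_le_decomposition.
Qed.

End LocalStability.

Lemma Mto_le_rescaled_decomposition {tau omega q C : R} {u u' v : V} {w : forall k, Vk k} :
  (0 < N)%N -> 0 < tau -> 0 <= omega -> G v \is a fin_num ->
  (forall k, 0 <= d k (w k) v)%E ->
  u' - v = tau^-1 *: (u - v) -> u' - v = \sum_(k < N) Rs k (w k) ->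
  (\sum_(k < N) d k (w k) v <= (C `^ q / q * `|u' - v| `^ q)%:E)%E ->
  (\sum_(k < N) Gk k (w k) v <= G u' + (N.-1)%:R%:E * G v)%E ->
  (Mto Rs d Gk G tau omega u v
     <= (omega * C `^ q / (q * tau `^ (q - 1)) * `|u - v| `^ q)%:E
        + tau%:E * G u' + (1 - tau)%:E * G v)%E.
Proof.
move=> N_gt0 tau_gt0 omega_ge0 Gv_fin d_ge0 u'v u'vw dC GkB.
have uvw : u - v = tau *: \sum_(k < N) Rs k (w k).
  by rewrite -u'vw u'v scalerA mulfV ?gt_eqF // scale1r.
apply: le_trans (Mto_le_decomposition tau_gt0 omega_ge0 d_ge0 uvw dC GkB) _.
rewrite u'v normrZ gtr0_norm ?invr_gt0 // -(fineK Gv_fin); set gv := fine (G v).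
rewrite -!EFinM muleDr // muleDr ?fin_num_adde_defl // -!EFinM.
have -> : tau * (omega * (C `^ q / q * (tau^-1 * `|u - v|) `^ q)) =
          omega * C `^ q / (q * tau `^ (q - 1)) * `|u - v| `^ q.
  by rewrite mulrCA [tau * _]mulrCA mulr_powR_invM // invfM; ring.
rewrite addeA -[leLHS]addeA -EFinD (_ : tau * _ + _ = (1 - tau) * gv) //.
  by rewrite -subn1 natrB //; ring.
Qed.

End Mto.

Theorem lemma4p6 (R : realType) (V : completeNormedModType R)
  (F : V -> R) (G : V -> \bar R)
  (N : nat) (Vk : 'I_N -> completeNormedModType R)
  (Rs : forall k, {linear Vk k -> V})
  (d Gk : forall k, Vk k -> V -> \bar R)
  (q : R) (C0 : set V -> R) (tau0 omega0 : R) :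
  reflexive_space V ->
  (forall x, differentiable F x) -> cvx_fun F ->
  Gamma0 G ->
  (0 < N)%N ->
  (forall k, reflexive_space (Vk k)) ->
  (forall k, continuous (Rs k)) ->
  (forall v : V, exists w : forall k, Vk k, v = \sum_(k < N) Rs k (w k)) ->
  (forall k, adjoint_surjective (Rs k)) ->
  (forall k v, proper_efun (fun w => d k w v) /\ cvx_efun (fun w => d k w v) /\
               lower_semicontinuous (fun w => d k w v)) ->
  (forall k v, proper_efun (fun w => Gk k w v) /\ cvx_efun (fun w => Gk k w v) /\
               lower_semicontinuous (fun w => Gk k w v)) ->
  (* (i) stable decomposition *)
  1 < q ->
  (forall K : set V, bounded_set K -> cvx_set K ->
     0 < C0 K /\
     forall u v, K u -> K v -> dom G u -> dom G v ->
       exists w : forall k, Vk k,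
         u - v = \sum_(k < N) Rs k (w k) /\
         (\sum_(k < N) d k (w k) v <= ((C0 K `^ q) / q * `|u - v| `^ q)%R%:E)%E /\
         (\sum_(k < N) Gk k (w k) v <= G u + (N.-1)%:R%:E * G v)%E) ->
  (* (ii) strengthened convexity *)
  0 < tau0 <= 1 ->
  (forall (v : V) (w : forall k, Vk k) (tau : R), 0 < tau <= tau0 ->
     ((F (v + tau *: \sum_(k < N) Rs k (w k))%R)%:E
        + G (v + tau *: \sum_(k < N) Rs k (w k))%R
      <= (1 - tau * N%:R)%:E * ((F v)%:E + G v)
         + tau%:E * \sum_(k < N) ((F (v + Rs k (w k))%R)%:E + G (v + Rs k (w k))%R))%E) ->
  (* (iii) local stability *)
  0 < omega0 ->
  (forall v, dom G v -> forall k (w : Vk k),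
     ((bregman F (v + Rs k w)%R v)%:E <= omega0%:E * d k w v)%E /\
     (G (v + Rs k w)%R <= Gk k w v)%E) ->
  forall tau omega : R, 0 < tau <= tau0 -> omega0 <= omega ->
  forall K : set V, bounded_set K -> cvx_set K ->
  forall u v, K u -> K v -> dom G u -> dom G v ->
  let K' := [set x | exists u' v', K u' /\ K v' /\
                     x = tau^-1 *: u' - (tau^-1 - 1) *: v'] in
  ((bregman F u v)%:E + G u <= Mto Rs d Gk G tau omega u v)%E /\
  (Mto Rs d Gk G tau omega u v
     <= (omega * C0 K' `^ q / (q * tau `^ (q - 1)) * `|u - v| `^ q)%R%:E
        + tau%:E * G (tau^-1 *: u - (tau^-1 - 1) *: v)%R
        + (1 - tau)%:E * G v)%E.
Proof.
move=> _ dF cvxF [G_proper _ _] N_gt0 _ _ _ _ _ _ _ stable_decomposition _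
  strengthened_convexity omega0_gt0 local_stability tau omega tau_range omega0_le
  K bK cK u v Ku Kv _ Gv K'.
have [tau_gt0 _] := andP tau_range.
have Gv_fin := proper_dom_fin_num G_proper Gv.
split.
  apply: (bregman_addG_le_Mto cvxF (dF v) omega0_gt0 omega0_le (local_stability v Gv)) => //.
  by move=> w; exact: strengthened_convexity.
set u' := tau^-1 *: u - (tau^-1 - 1) *: v.
have [Gu'|/negP] := pselect (dom G u'); last first.
  rewrite ltey negbK => /eqP ->; rewrite gt0_muley ?lte_fin // addey //.
  by rewrite -(fineK Gv_fin) -EFinM addye // leey.
have bK' : bounded_set K' by exact: lincomb_set_bounded.
have cK' : cvx_set K' by exact: lincomb_set_cvx.
have K'u' : K' u' by exists u, v.
have K'v : K' v by exact: lincomb_set_diag.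
have [_ stable] := stable_decomposition K' bK' cK'.
have [w [u'vw [dw Gkw]]] := stable u' v K'u' K'v Gu' Gv.
apply: (Mto_le_rescaled_decomposition N_gt0 tau_gt0 _ Gv_fin _ _ u'vw dw Gkw).
- exact: le_trans (ltW omega0_gt0) omega0_le.
- move=> k; exact: (local_dist_ge0 cvxF (dF v) omega0_gt0 (local_stability v Gv)).
- by rewrite /u' scalerBl scale1r scalerBr opprB [v - _]addrC addrA addrK.
Qed.
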